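(* Suppose that $\sup_{u\in[0,1]}\|\Sigma(u)\|_2<\infty$, that $\Sigma(u)$ is positive definite for every $u$, and that $\inf_{u\in[0,1]}\Delta(u)>0$. Let $\hat\mu_1(u),\hat\mu_2(u),\hat\theta(u)$ be any estimators (depending on the sample size $n$) and put $\hat\mu(u)=(\hat\mu_1(u)+\hat\mu_2(u))/2$. If, as $n\to\infty$, $\|\hat\mu_1(u)-\mu_1(u)\|_2=o(1)$, $\|\hat\mu_2(u)-\mu_2(u)\|_2=o(1)$ and $\|\hat\theta(u)-\theta^*(u)\|_2=o(1)$, then for every $u\in[0,1]$, $$|R_n(u)-R(u)|\lesssim \|\hat\theta(u)-\theta^*(u)\|_2^2+\big|(\hat\mu(u)-\mu(u))^\top\beta^*(u)\big|^2 .$$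
   Context: Model: $U\in[0,1]$ is an exposure variable, $Y\in\{0,1\}$ a label independent of $U$ with $\mathbb P(Y=1)=\mathbb P(Y=0)=1/2$, and $X\in\mathbb R^p$ satisfies, conditionally on $U=u$, $X\sim\mathcal N(\mu_1(u),\Sigma(u))$ if $Y=1$ and $X\sim\mathcal N(\mu_2(u),\Sigma(u))$ if $Y=0$. Write $\delta(u)=\mu_1(u)-\mu_2(u)$, $\mu(u)=(\mu_1(u)+\mu_2(u))/2$, $\beta^*(u)=\Sigma(u)^{-1}\delta(u)$, $\Delta(u)=\sqrt{\delta(u)^\top\Sigma(u)^{-1}\delta(u)}$. Let $Z=\mathbb 1(Y=1)-1/2$ and let $\theta^*(u)$ be the minimizer over $\theta\in\mathbb R^p$ of $\mathbb E[(Z-\theta^\top(X-\mu(U)))^2\mid U=u]$ (a positive multiple of $\beta^*(u)$). The oracle risk is $R(u)=\Phi(-\Delta(u)/2)$, where $\Phi$ is the standard normal cdf and $\bar\Phi=1-\Phi$. The conditional misclassification risk of the rule $\mathbb 1\{(x-\hat\mu(u))^\top\hat\theta(u)\ge 0\}$ is $$R_n(u)=\tfrac12\Phi\Big(\tfrac{(\hat\mu(u)-\mu_1(u))^\top\hat\theta(u)}{\sqrt{\hat\theta(u)^\top\Sigma(u)\hat\theta(u)}}\Big)+\tfrac12\bar\Phi\Big(\tfrac{(\hat\mu(u)-\mu_2(u))^\top\hat\theta(u)}{\sqrt{\hat\theta(u)^\top\Sigma(u)\hat\theta(u)}}\Big).$$ $a\lesssim b$ means $a\le Cb$ for a constant $C$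 not depending on $n$ or $u$. *)

From mathcomp Require Import all_boot all_order all_algebra.
From mathcomp Require Import all_classical all_reals all_analysis.
Set Implicit Arguments. Unset Strict Implicit. Unset Printing Implicit Defensive.
Import Order.TTheory GRing.Theory Num.Theory.
Local Open Scope ring_scope.

Section Defs.
Variable R : realType.

Definition Phi (x : R) : R := fine (normal_prob 0 1 `]-oo, x]%classic).
Definition Phibar (x : R) : R := 1 - Phi x.

Definition dotv (p : nat) (a b : 'cV[R]_p) : R := (a^T *m b) 0 0.
Definition norm2 (p : nat) (a : 'cV[R]_p) : R := Num.sqrt (dotv a a).

Definition Mahal (p : nat) (Sigma : 'M[R]_p) (delta : 'cV[R]_p) : R :=
  Num.sqrt (dotv delta (invmx Sigma *m delta)).

(* E[(Z - theta^T (X - mu(U)))^2 | U = u], written as squared bias plus variance: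
   given Y=1, Z - theta^T(X-mu) ~ N(1/2 - theta^T delta/2, theta^T Sigma theta);
   given Y=0, it is ~ N(-(1/2 - theta^T delta/2), theta^T Sigma theta). *)
Definition cond_sq_loss (p : nat) (Sigma : 'M[R]_p) (delta theta : 'cV[R]_p) : R :=
  (2^-1 * (2^-1 - dotv theta delta / 2) ^+ 2
     + 2^-1 * (- 2^-1 + dotv theta delta / 2) ^+ 2)
  + dotv theta (Sigma *m theta).

(* conditional misclassification risk of x |-> 1{(x - muhat)^T thetahat >= 0} *)
Definition cond_risk (p : nat) (Sigma : 'M[R]_p) (mu1 mu2 muhat thetahat : 'cV[R]_p) : R :=
  let s := Num.sqrt (dotv thetahat (Sigma *m thetahat)) in
  2^-1 * Phi (dotv (muhat - mu1) thetahat / s)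
  + 2^-1 * Phibar (dotv (muhat - mu2) thetahat / s).

End Defs.

From mathcomp Require Import all_boot all_order all_algebra.
From mathcomp Require Import all_classical all_reals all_analysis.
From mathcomp Require Import measurable_realfun ring lra.
Import Order.TTheory GRing.Theory Num.Theory numFieldNormedType.Exports.
Local Open Scope classical_set_scope.
Local Open Scope ring_scope.

(* Put c := 1 / (4 + Delta^2); the least-squares direction is theta* = c beta*,
   and we write thetahat = theta* + h.  With s^2 = thetahat' Sigma thetahat,
   k = delta' thetahat / (2 s) and tau = (muhat - mu)' thetahat / s, the risk is
   Phi(tau - k) / 2 + Phibar(tau + k) / 2.  Cauchy-Schwarz for the Sigma-inner
   product gives k <= Delta / 2 with Delta^2 / 4 - k^2 = O(|h|^2), and
   tau = O(|(muhat - mu)' beta*| + |h|).  As t |-> Phi(t - k) + Phi(-t - k) is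
   even, the risk exceeds Phi(-k) by O(tau^2) only, while
   Phi(-k) - Phi(-Delta / 2) = O(Delta / 2 - k).  All the powers of 4 + Delta^2
   that appear are absorbed by the Gaussian factor phi(-Delta / 8), which makes
   the constant uniform in u. *)

Lemma sqr_le_of_quadratic_ge0 (R : realFieldType) (A B C : R) : 0 <= C ->
  (forall t, 0 <= A - 2 * t * B + t ^+ 2 * C) -> B ^+ 2 <= A * C.
Proof.
move=> C0 quad_ge0; have [C_gt0|] := ltP 0 C.
  have := quad_ge0 (B / C).
  have -> : A - 2 * (B / C) * B + (B / C) ^+ 2 * C = A - B ^+ 2 / C.
    by field; rewrite gt_eqF.
  by rewrite subr_ge0 ler_pdivrMr.
move=> C_le0; have C_eq0 : C = 0 by apply/eqP; rewrite eq_le C_le0 C0.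
rewrite C_eq0 {C C0 C_le0 C_eq0} in quad_ge0 *.
have [->|B_neq0] := eqVneq B 0; first by rewrite expr0n mulr0.
have := quad_ge0 ((A + 1) / (2 * B)).
have -> : A - 2 * ((A + 1) / (2 * B)) * B + ((A + 1) / (2 * B)) ^+ 2 * 0 = -1.
  by field.
by rewrite oppr_ge0 ler10.
Qed.

Section dotv.
Context {R : realType} {p : nat}.
Implicit Types (x y z : 'cV[R]_p) (S : 'M[R]_p).

Lemma dotvC x y : dotv x y = dotv y x.
Proof. by rewrite /dotv -[x^T *m y]trmxK trmx_mul trmxK mxE. Qed.

Lemma dotvDl x y z : dotv (x + y) z = dotv x z + dotv y z.
Proof. by rewrite /dotv linearD mulmxDl mxE. Qed.

Lemma dotvZl a x y : dotv (a *: x) y = a * dotv x y.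
Proof. by rewrite /dotv linearZ -scalemxAl mxE. Qed.

Lemma dotvBl x y z : dotv (x - y) z = dotv x z - dotv y z.
Proof. by rewrite dotvDl -scaleN1r dotvZl mulN1r. Qed.

Lemma dotvDr x y z : dotv x (y + z) = dotv x y + dotv x z.
Proof. by rewrite dotvC dotvDl !(dotvC x). Qed.

Lemma dotvZr a x y : dotv x (a *: y) = a * dotv x y.
Proof. by rewrite dotvC dotvZl dotvC. Qed.

Lemma dotvBr x y z : dotv x (y - z) = dotv x y - dotv x z.
Proof. by rewrite dotvC dotvBl !(dotvC x). Qed.

Lemma dotv0r x : dotv x 0 = 0.
Proof. by rewrite -(scale0r 0) dotvZr mul0r. Qed.

Lemma dotv_mulmx S x y : dotv x (S *m y) = dotv (S^T *m x) y.
Proof. by rewrite /dotv trmx_mul trmxK mulmxA. Qed.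

Lemma dotvv_ge0 x : 0 <= dotv x x.
Proof.
by rewrite /dotv mxE; apply: sumr_ge0 => i _; rewrite mxE -expr2 sqr_ge0.
Qed.

Lemma norm2_ge0 x : 0 <= norm2 x.
Proof. exact: sqrtr_ge0. Qed.

Lemma sqr_norm2 x : norm2 x ^+ 2 = dotv x x.
Proof. by rewrite sqr_sqrtr ?dotvv_ge0. Qed.

Lemma norm2Z a x : norm2 (a *: x) = `|a| * norm2 x.
Proof. by rewrite /norm2 dotvZl dotvZr mulrA -expr2 sqrtrM ?sqr_ge0 // sqrtr_sqr. Qed.

Lemma sqr_dotv_mulmx_le S x y : S^T = S -> (forall z, 0 <= dotv z (S *m z)) ->
  dotv x (S *m y) ^+ 2 <= dotv x (S *m x) * dotv y (S *m y).
Proof.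
move=> S_sym S_psd; apply: sqr_le_of_quadratic_ge0 => [|t]; first exact: S_psd.
have := S_psd (x - t *: y).
rewrite mulmxBr -scalemxAr !dotvBl !dotvBr !dotvZl !dotvZr.
rewrite [dotv y (S *m x)]dotv_mulmx S_sym [dotv (S *m y) x]dotvC; lra.
Qed.

Lemma normr_dotv_le x y : `|dotv x y| <= norm2 x * norm2 y.
Proof.
have id_psd z : 0 <= dotv z (1%:M *m z) by rewrite mul1mx dotvv_ge0.
have := sqr_dotv_mulmx_le 1%:M x y (trmx1 _ _) id_psd.
rewrite !mul1mx -!sqr_norm2 -exprMn -real_normK ?num_real// ler_sqr// nnegrE.
exact: mulr_ge0 (norm2_ge0 x) (norm2_ge0 y).
Qed.

Lemma norm2D_le x y : norm2 (x + y) <= norm2 x + norm2 y.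
Proof.
rewrite -ler_sqr ?nnegrE ?norm2_ge0 ?addr_ge0 ?norm2_ge0//.
rewrite sqr_norm2 sqrrD !sqr_norm2 dotvDl !dotvDr (dotvC y x) mulr2n.
have := ler_norm (dotv x y); have := normr_dotv_le x y; lra.
Qed.

Lemma norm2_midpoint_le e x1 x2 y1 y2 :
  norm2 (x1 - y1) <= e -> norm2 (x2 - y2) <= e ->
  norm2 (2^-1 *: (x1 + x2) - 2^-1 *: (y1 + y2)) <= e.
Proof.
move=> le1 le2; rewrite -scalerBr opprD addrACA norm2Z ger0_norm ?invr_ge0//.
rewrite ler_pdivrMl// mulr_natl mulr2n.
exact: le_trans (norm2D_le _ _) (lerD le1 le2).
Qed.

Lemma pd_unitmx S : (forall x, x != 0 -> 0 < dotv x (S *m x)) -> S \in unitmx.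
Proof.
move=> S_pd; rewrite unitmxE unitfE; apply/negP => /det0P [v v_neq0 vS].
have := S_pd v^T; rewrite trmx_eq0 v_neq0 /dotv trmxK mulmxA vS mul0mx mxE ltxx.
by move/(_ isT).
Qed.

End dotv.

Section standard_normal.
Context {R : realType}.
Local Notation P := (normal_prob (0 : R) 1).
Local Notation phi := (normal_pdf (0 : R) 1).
Local Notation peak := (normal_peak (1 : R)).

Lemma normal_prob_fin_num (A : set R) : measurable A -> P A \is a fin_num.
Proof.
move=> mA; rewrite ge0_fin_numE; last exact: measure_ge0.
exact: le_lt_trans (probability_le1 P mA) (ltry _).
Qed.

Lemma PhiB (a b : R) : a <= b -> Phi b - Phi a = fine (P `]a, b]).
Proof.
move=> ab; rewrite /Phi (@itv_bndbnd_setU _ _ _ (BRight a)) ?bnd_simp//.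
rewrite measureU//=; last first.
  apply/seteqP; split => x //= [/=]; rewrite !in_itv/= => xa /andP[ax _].
  by move: ax; rewrite ltNge xa.
by rewrite fineD ?normal_prob_fin_num// addrAC subrr add0r.
Qed.

Lemma phiE x : phi x = peak * expR (- (x ^+ 2) / 2).
Proof. by rewrite /normal_pdf oner_eq0 /normal_fun subr0 expr1n. Qed.

Lemma peak_gt0 : 0 < peak.
Proof. exact: normal_peak_gt0 (oner_neq0 _). Qed.

Lemma phi_ge0 x : 0 <= phi x.
Proof. exact: normal_pdf_ge0. Qed.

Lemma phi_le_peak x : phi x <= peak.
Proof. exact: normal_pdf_ub (oner_neq0 _). Qed.

Lemma phiN x : phi (- x) = phi x.
Proof. by rewrite !phiE sqrrN. Qed.

Lemma PhiN (x : R) : Phi (- x) = 1 - Phi x.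
Proof.
rewrite /Phi; have -> : P `]-oo, - x] = P `]x, +oo[.
  rewrite /normal_prob ge0_integration_by_substitutionNy; last 2 first.
  - by apply: continuous_subspaceT => t; exact: continuous_normal_pdf.
  - by move=> t _; exact: normal_pdf_ge0.
  rewrite integral_itv_obnd_cbnd; last first.
    by apply/measurable_EFinP; apply: measurable_funTS; exact: measurable_normal_pdf.
  by apply: eq_integral => t _ /=; rewrite phiN.
by rewrite -setCitvl probability_setC// fineB// ?normal_prob_fin_num.
Qed.

Lemma PhiB_bounds (a b lo hi : R) : a <= b -> 0 <= lo ->
  (forall x, a < x <= b -> lo <= phi x <= hi) ->
  (b - a) * lo <= Phi b - Phi a <= (b - a) * hi.
Proof.
move=> ab lo0 phi_ab; rewrite PhiB//.
have mphi : measurable_fun `]a, b] (fun x => (phi x)%:E).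
  by apply/measurable_EFinP; apply: measurable_funTS; exact: measurable_normal_pdf.
have length_ab : lebesgue_measure `]a, b] = (b - a)%:E.
  rewrite lebesgue_measure_itv/= lte_fin; case: ltP => //= ba.
  have -> : b = a by apply/eqP; rewrite eq_le ab ba.
  by rewrite subrr.
have int_cst v : ((b - a) * v)%:E = (\int[lebesgue_measure]_(x in `]a, b]) (cst v%:E) x)%E.
  rewrite integral_cst// [X in (_ * X)%E](_ : _ = (b - a)%:E); last exact: length_ab.
  by rewrite -EFinM mulrC.
apply/andP; split; rewrite -lee_fin fineK ?normal_prob_fin_num// int_cst.
- apply: ge0_le_integral => //= x.
  by rewrite in_itv/= => /phi_ab/andP[+ _]; rewrite lee_fin.
- apply: ge0_le_integral => //= x; first by rewrite lee_fin phi_ge0.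
  by rewrite in_itv/= => /phi_ab/andP[_ +]; rewrite lee_fin.
Qed.

Lemma ler_phi (x y : R) : x <= y -> y <= 0 -> phi x <= phi y.
Proof.
move=> xy y0; have x0 : x <= 0 := le_trans xy y0.
rewrite !phiE ler_pM2l ?peak_gt0// ler_expR ler_pM2r ?invr_gt0// lerN2; nra.
Qed.

Lemma PhiD_nonpos_bounds (a h : R) : 0 <= h -> a + h <= 0 ->
  h * phi a <= Phi (a + h) - Phi a <= h * phi (a + h).
Proof.
move=> h0 ah0; have := PhiB_bounds a (a + h) (phi a) (phi (a + h)).
rewrite addrAC subrr add0r; apply; rewrite ?lerDl ?phi_ge0// => x /andP[ax xah].
by rewrite !ler_phi ?(ltW ax) ?(le_trans xah ah0).
Qed.

Lemma phiB_le (t k : R) : 0 <= t -> 0 <= k ->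
  phi (- k + t) - phi (- k - t) <= 2 * k * t * phi (- k + t).
Proof.
move=> t0 k0; rewrite !phiE.
have -> : - ((- k - t) ^+ 2) / 2 = - ((- k + t) ^+ 2) / 2 - 2 * k * t by field.
rewrite expRD; have := expR_ge1Dx (- (2 * k * t)).
have := mulr_gt0 peak_gt0 (expR_gt0 (- ((- k + t) ^+ 2) / 2)).
move: (expR _) (expR _) => a b; nra.
Qed.

Lemma phi_decay (D : R) : (4 + D ^+ 2) ^+ 2 * phi (- D / 8) <= 256 ^+ 2 * peak.
Proof.
rewrite phiE; set y := D ^+ 2 / 128.
have y0 : 0 <= y by rewrite divr_ge0 ?sqr_ge0.
have -> : - ((- D / 8) ^+ 2) / 2 = - y by rewrite /y; field.
have -> : D ^+ 2 = 128 * y by rewrite /y; field.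
have ab1 : expR (- y) * (expR (y / 2) * expR (y / 2)) = 1.
  by rewrite -!expRD (_ : _ + _ = 0) ?expR0//; field.
have b_ge := expR_ge1Dx (y / 2); have a0 := expR_gt0 (- y).
move: ab1 b_ge a0; set a := expR (- y); set b := expR (y / 2) => ab1 b_ge a0.
have sq : (4 + 128 * y) ^+ 2 <= (256 * b) ^+ 2 by rewrite ler_sqr ?nnegrE; lra.
have bound : (4 + 128 * y) ^+ 2 * a <= 256 ^+ 2.
  have -> : 256 ^+ 2 = (256 * b) ^+ 2 * a :> R by rewrite -[LHS]mulr1 -ab1; ring.
  by rewrite ler_pM2r.
by rewrite mulrCA [_ * peak]mulrC ler_pM2l ?peak_gt0.
Qed.

Lemma Phi_second_diff_bounds (t k : R) : 0 <= t <= k ->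
  0 <= Phi (- k + t) + Phi (- k - t) - 2 * Phi (- k) <= 2 * k * t ^+ 2 * phi (- k + t).
Proof.
move=> /andP[t0 tk]; have k0 := le_trans t0 tk.
have /andP[l1 u1] := @PhiD_nonpos_bounds (- k) t t0 ltac:(lra).
have /andP[l2 u2] := @PhiD_nonpos_bounds (- k - t) t t0 ltac:(lra).
rewrite subrK in l2 u2.
have := ler_wpM2l t0 (phiB_le t k t0 k0); rewrite mulrBr => lip.
apply/andP; split; first lra.
have -> : 2 * k * t ^+ 2 * phi (- k + t) = t * (2 * k * t * phi (- k + t)) by ring.
lra.
Qed.

Lemma Phi_gap_le (D k tau : R) : 0 < D -> D / 4 <= k <= D / 2 -> `|tau| <= k / 2 ->
  `|2^-1 * Phi (tau - k) + 2^-1 * Phibar (tau + k) - Phi (- D / 2)|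
    <= (k * tau ^+ 2 + (D / 2 - k)) * phi (- D / 8).
Proof.
move=> D0 /andP[kD4 kD2] tau_k; pose t : R := `|tau|; have t_k2 : t <= k / 2 := tau_k.
have t0 : 0 <= t := normr_ge0 tau.
have tauE : tau ^+ 2 = t ^+ 2 by rewrite real_normK ?num_real.
have PhiE : Phi (tau - k) + Phibar (tau + k) = Phi (- k + t) + Phi (- k - t).
  rewrite /Phibar -PhiN opprD /t; have [tau0|tau0] := lerP 0 tau.
    by rewrite ger0_norm//; congr (Phi _ + Phi _); ring.
  by rewrite ltr0_norm// addrC; congr (Phi _ + Phi _); ring.
have t_k : 0 <= t <= k by rewrite t0 /=; lra.
have /andP[d0 d1] := Phi_second_diff_bounds t k t_k.
have /andP[w0 w1] := @PhiD_nonpos_bounds (- D / 2) (D / 2 - k) ltac:(lra) ltac:(lra).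
rewrite (_ : - D / 2 + (D / 2 - k) = - k) in w0 w1; last by field.
have m1 : phi (- k + t) <= phi (- D / 8) by apply: ler_phi; lra.
have m2 : phi (- k) <= phi (- D / 8) by apply: ler_phi; lra.
have -> : 2^-1 * Phi (tau - k) + 2^-1 * Phibar (tau + k) - Phi (- D / 2)
    = 2^-1 * (Phi (- k + t) + Phi (- k - t) - 2 * Phi (- k)) + (Phi (- k) - Phi (- D / 2)).
  by rewrite -mulrDr PhiE; field.
have w_ge0 : 0 <= D / 2 - k by lra.
have kt_ge0 : 0 <= k * t ^+ 2 by rewrite mulr_ge0 ?sqr_ge0 ?(le_trans _ kD4) ?divr_ge0 ?ltW.
have := ler_wpM2l kt_ge0 m1; have := ler_wpM2l w_ge0 m2.
rewrite ger0_norm; last by have := mulr_ge0 w_ge0 (phi_ge0 (- D / 2)); lra.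
rewrite tauE; lra.
Qed.

Lemma Phi_gap_le_quadratic (D k tau M r e : R) :
  0 < D -> 0 <= k <= D / 2 -> 0 <= M -> 0 <= r ->
  D ^+ 2 / 4 - k ^+ 2 <= M * r * (4 + D ^+ 2) ^+ 2 ->
  16 * M * r * (4 + D ^+ 2) ^+ 2 <= 3 * D ^+ 2 ->
  `|tau| <= k / 2 ->
  D ^+ 2 * tau ^+ 2 <= 8 * (e ^+ 2 + r * (4 + D ^+ 2) ^+ 2) ->
  `|2^-1 * Phi (tau - k) + 2^-1 * Phibar (tau + k) - Phi (- D / 2)|
    <= 2 * 256 ^+ 2 * peak * (2 + M) / D * (r + e ^+ 2).
Proof.
move=> D0 /andP[k0 kD2] M0 r0 k_sq small tau_k tau_sq.
set kappa := (4 + D ^+ 2) ^+ 2 in k_sq small tau_sq *.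
have kappa0 : 0 <= kappa := sqr_ge0 _.
have Mr0 : 0 <= M * r * kappa := mulr_ge0 (mulr_ge0 M0 r0) kappa0.
have kD4 : D / 4 <= k.
  have k2 : D ^+ 2 / 16 <= k ^+ 2 by lra.
  by rewrite leNgt; apply/negP => kD; nra.
have w_ge0 : 0 <= D / 2 - k by lra.
have wD : (D / 2 - k) * D <= 2 * (M * r * kappa).
  have : (D / 2 - k) * (D / 2 + k) = D ^+ 2 / 4 - k ^+ 2 by field.
  have := mulr_ge0 w_ge0 k0; nra.
apply: le_trans (Phi_gap_le D k tau D0 _ tau_k) _; first by rewrite kD4 kD2.
have q0 := phi_ge0 (- D / 8); have q_peak := phi_le_peak (- D / 8).
have q_decay := phi_decay D; rewrite -/kappa in q_decay.
move: q0 q_peak q_decay; set q := phi (- D / 8) => q0 q_peak q_decay.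
rewrite mulrAC ler_pdivlMr//.
have tau2 := sqr_ge0 tau; have e2 := sqr_ge0 e.
have ktau : k * tau ^+ 2 * D <= D ^+ 2 * tau ^+ 2 / 2.
  have := mulr_ge0 (mulr_ge0 w_ge0 tau2) (ltW D0); nra.
have scaled_gap : (k * tau ^+ 2 + (D / 2 - k)) * q * D
    <= (4 * e ^+ 2 + (4 + 2 * M) * r * kappa) * q.
  rewrite mulrAC; apply: ler_wpM2r => //; nra.
have e_part : 4 * e ^+ 2 * q <= 4 * e ^+ 2 * peak.
  by apply: ler_wpM2l => //; rewrite mulr_ge0.
have r_part : (4 + 2 * M) * r * (kappa * q) <= (4 + 2 * M) * r * (256 ^+ 2 * peak).
  by apply: ler_wpM2l => //; rewrite !mulr_ge0 ?addr_ge0 ?mulr_ge0.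
have pk : 0 < peak := peak_gt0.
have : 4 * e ^+ 2 * peak <= 2 * 256 ^+ 2 * peak * (2 + M) * e ^+ 2.
  have c1 : 1 <= 256 ^+ 2 :> R by rewrite exprn_ege1// ler1n.
  have : 4 <= 2 * 256 ^+ 2 * (2 + M) :> R by nra.
  have := mulr_ge0 e2 (ltW pk); nra.
nra.
Qed.

(* [K], [e] and [s] stand for [delta' theta], [(muhat - mu)' theta] and
   [sqrt (theta' Sigma theta)]. *)
Lemma Phi_gap_le_ratio (D s K e M r b : R) :
  0 < D -> 0 < s -> 0 <= M -> 0 <= r ->
  D ^+ 2 <= 2 * K * (4 + D ^+ 2) ->
  K ^+ 2 <= (D * s) ^+ 2 ->
  (D * s) ^+ 2 - K ^+ 2 <= D ^+ 2 * M * r ->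
  16 * M * r * (4 + D ^+ 2) ^+ 2 <= 3 * D ^+ 2 ->
  4 * `|e| <= K ->
  e ^+ 2 * (4 + D ^+ 2) ^+ 2 <= 2 * (b ^+ 2 + r * (4 + D ^+ 2) ^+ 2) ->
  `|2^-1 * Phi ((e - K / 2) / s) + 2^-1 * Phibar ((e + K / 2) / s) - Phi (- D / 2)|
    <= 2 * 256 ^+ 2 * peak * (2 + M) / D * (r + b ^+ 2).
Proof.
move=> D0 s0 M0 r0 K_lb K_ub gap small e_K e_sq.
set kappa := (4 + D ^+ 2) ^+ 2 in small e_sq *.
have D2_gt0 : 0 < D ^+ 2 := exprn_gt0 2 D0.
have K0 : 0 < K by nra.
have K_le : K <= D * s.
  by rewrite -ler_sqr ?nnegrE ?(ltW K0) ?(ltW (mulr_gt0 D0 s0)).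
have s_lb : D ^+ 2 <= 4 * kappa * s ^+ 2.
  have : (D ^+ 2) ^+ 2 <= 4 * kappa * K ^+ 2.
    rewrite (_ : 4 * kappa * K ^+ 2 = (2 * K * (4 + D ^+ 2)) ^+ 2); last by rewrite /kappa; ring.
    by rewrite ler_sqr ?nnegrE ?(ltW D2_gt0) ?mulr_ge0 ?addr_ge0 ?(ltW K0) ?(ltW D2_gt0).
  move=> D4_le; rewrite -(ler_pM2l D2_gt0) -expr2 (le_trans D4_le)//.
  have -> : D ^+ 2 * (4 * kappa * s ^+ 2) = 4 * kappa * (D * s) ^+ 2 by ring.
  by rewrite ler_wpM2l// mulr_ge0// sqr_ge0.
have s2_gt0 : 0 < s ^+ 2 := exprn_gt0 2 s0.
have -> : (e - K / 2) / s = e / s - K / (2 * s) by field; rewrite gt_eqF.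
have -> : (e + K / 2) / s = e / s + K / (2 * s) by field; rewrite gt_eqF.
have kE : (K / (2 * s)) ^+ 2 * (4 * s ^+ 2) = K ^+ 2 by field; rewrite gt_eqF.
have tauE : (e / s) ^+ 2 * s ^+ 2 = e ^+ 2 by field; rewrite gt_eqF.
apply: Phi_gap_le_quadratic => //.
- apply/andP; split; first by rewrite divr_ge0// ltW// mulr_gt0.
  by rewrite ler_pdivrMr ?mulr_gt0//; lra.
- have Mr_le : D ^+ 2 * M * r <= M * r * kappa * (4 * s ^+ 2).
    by have := mulr_ge0 M0 r0; nra.
  have DsE : D ^+ 2 / 4 * (4 * s ^+ 2) = (D * s) ^+ 2 by field.
  have : (D ^+ 2 / 4 - (K / (2 * s)) ^+ 2) * (4 * s ^+ 2) <= M * r * kappa * (4 * s ^+ 2).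
    by rewrite mulrBl kE DsE; lra.
  by rewrite ler_pM2r// mulr_gt0.
- rewrite normrM normfV (gtr0_norm s0) ler_pdivrMr// mulrAC ler_pdivlMr ?mulr_gt0//.
  have -> : K / (2 * s) * s = K / 2 by field; rewrite gt_eqF.
  lra.
- rewrite -/kappa; have := ler_wpM2r (sqr_ge0 (e / s)) s_lb.
  have -> : 4 * kappa * s ^+ 2 * (e / s) ^+ 2 = 4 * kappa * e ^+ 2 by rewrite -tauE; ring.
  lra.
Qed.

End standard_normal.

Section least_squares.
Context {R : realType} {p : nat} (S : 'M[R]_p) (delta : 'cV[R]_p).
Hypothesis S_sym : S^T = S.
Hypothesis S_pd : forall x, x != 0 -> 0 < dotv x (S *m x).

Local Notation beta := (invmx S *m delta).
Local Notation D2 := (dotv delta beta).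
Local Notation c := (4 + D2)^-1.

Lemma dotv_mulmx_ge0 x : 0 <= dotv x (S *m x).
Proof. by have [->|/S_pd/ltW//] := eqVneq x 0; rewrite mulmx0 dotv0r. Qed.

Lemma mulmx_beta : S *m beta = delta.
Proof. by rewrite mulmxA mulmxV ?mul1mx ?pd_unitmx. Qed.

Lemma dotv_beta_mulmx x : dotv beta (S *m x) = dotv delta x.
Proof. by rewrite dotv_mulmx S_sym mulmx_beta. Qed.

Lemma Mahal2_ge0 : 0 <= D2.
Proof. by rewrite -[X in dotv X]mulmx_beta dotvC dotv_mulmx_ge0. Qed.

Lemma mulVDMahal2 : c * (4 + D2) = 1.
Proof. by rewrite mulVf// gt_eqF// ltr_wpDr ?Mahal2_ge0. Qed.

Lemma dotv_mulmx_shift a h :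
  dotv (a *: beta + h) (S *m (a *: beta + h))
  = a ^+ 2 * D2 + 2 * a * dotv delta h + dotv h (S *m h).
Proof.
rewrite mulmxDr -scalemxAr mulmx_beta !dotvDl !dotvZl !dotvDr !dotvZr.
by rewrite dotv_beta_mulmx (dotvC beta delta) (dotvC h delta); ring.
Qed.

Lemma cond_sq_loss_excess h :
  cond_sq_loss S delta (c *: beta + h)
  = cond_sq_loss S delta (c *: beta) + dotv delta h ^+ 2 / 4 + dotv h (S *m h).
Proof.
rewrite /cond_sq_loss mulmxDr -!scalemxAr mulmx_beta.
rewrite !dotvDl !dotvZl !dotvDr !dotvZr dotv_beta_mulmx (dotvC beta delta) (dotvC h delta).
have := mulVDMahal2; move: (4 + D2)^-1 => c; move: D2 (dotv delta h) (dotv h (S *m h)) => D g H cE.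
apply/eqP; rewrite -subr_eq0; apply/eqP.
transitivity (g * (c * (4 + D) - 1) / 2); first by field.
by rewrite cE subrr mulr0 mul0r.
Qed.

Lemma cond_sq_loss_argmin theta :
  (forall t, cond_sq_loss S delta theta <= cond_sq_loss S delta t) -> theta = c *: beta.
Proof.
move=> theta_min; apply/eqP; rewrite -subr_eq0; set h := theta - c *: beta.
have := theta_min (c *: beta); rewrite -[theta](subrK (c *: beta)) -/h addrC.
rewrite cond_sq_loss_excess -addrA gerDl.
have [//|/S_pd] := eqVneq h 0; have := sqr_ge0 (dotv delta h).
move: (dotv _ _) (dotv _ _) => g H; lra.
Qed.

End least_squares.

Section risk_gap.
Context {R : realType} {p : nat} (S : 'M[R]_p) (m1 m2 : 'cV[R]_p) (M : R).
Hypothesis S_sym : S^T = S.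
Hypothesis S_pd : forall x, x != 0 -> 0 < dotv x (S *m x).
Hypothesis M_ge0 : 0 <= M.
Hypothesis S_bound : forall x, norm2 (S *m x) <= M * norm2 x.
Hypothesis Mahal_gt0 : 0 < Mahal S (m1 - m2).

Local Notation delta := (m1 - m2).
Local Notation mu := (2^-1 *: (m1 + m2)).
Local Notation beta := (invmx S *m delta).
Local Notation D2 := (dotv delta beta).
Local Notation c := (4 + D2)^-1.

Lemma cond_riskE mh theta : cond_risk S m1 m2 mh theta =
  let s := Num.sqrt (dotv theta (S *m theta)) in
  2^-1 * Phi ((dotv (mh - mu) theta - dotv delta theta / 2) / s)
  + 2^-1 * Phibar ((dotv (mh - mu) theta + dotv delta theta / 2) / s).
Proof.
have e1 : dotv (mh - m1) theta = dotv (mh - mu) theta - dotv delta theta / 2.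
  by rewrite !dotvBl dotvZl dotvDl; field.
have e2 : dotv (mh - m2) theta = dotv (mh - mu) theta + dotv delta theta / 2.
  by rewrite !dotvBl dotvZl dotvDl; field.
by rewrite /cond_risk e1 e2.
Qed.

Lemma dotv_mulmx_le_sqr_norm2 h : dotv h (S *m h) <= M * norm2 h ^+ 2.
Proof.
apply: le_trans (ler_norm _) _; apply: le_trans (normr_dotv_le _ _) _.
by rewrite expr2 mulrCA ler_wpM2l ?norm2_ge0.
Qed.

Lemma cond_risk_gap_le mh h :
  2 * `|dotv delta h| <= c * D2 ->
  16 * M * norm2 h ^+ 2 * (4 + D2) ^+ 2 <= 3 * D2 ->
  8 * `|dotv (mh - mu) (c *: beta + h)| <= c * D2 ->
  norm2 (mh - mu) <= 1 ->
  `|cond_risk S m1 m2 mh (c *: beta + h) - Phi (- Mahal S delta / 2)|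
    <= 2 * 256 ^+ 2 * normal_peak 1 * (2 + M) / Mahal S delta
       * (norm2 h ^+ 2 + `|dotv (mh - mu) beta| ^+ 2).
Proof.
move=> g_small h_small e_small E_le1.
have D2_gt0 : 0 < D2 by rewrite -sqrtr_gt0.
have DE : Mahal S delta ^+ 2 = D2 by rewrite sqr_sqrtr ?ltW.
have cD2 : c * (4 + D2) = 1 := mulVDMahal2 S delta S_pd.
have c_gt0 : 0 < c by rewrite invr_gt0 ltr_wpDr ?ltW.
rewrite cond_riskE real_normK ?num_real//.
set th : 'cV_p := c *: beta + h; set E : 'cV_p := mh - mu in e_small E_le1 *.
have KE : dotv delta th = c * D2 + dotv delta h by rewrite dotvDr dotvZr.
have eE : dotv E th = c * dotv E beta + dotv E h by rewrite dotvDr dotvZr.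
have QE := dotv_mulmx_shift S delta S_sym S_pd c h; rewrite -/th in QE.
have K_lb : c * D2 / 2 <= dotv delta th.
  by rewrite KE; have := ler_norm (- dotv delta h); rewrite normrN; lra.
have K_CS : dotv delta th ^+ 2 <= D2 * dotv th (S *m th).
  have := sqr_dotv_mulmx_le S beta th S_sym (dotv_mulmx_ge0 S S_pd).
  by rewrite (dotv_beta_mulmx S delta S_sym S_pd) (mulmx_beta S delta S_pd) (dotvC beta).
have Q_gt0 : 0 < dotv th (S *m th).
  rewrite -(pmulr_rgt0 _ D2_gt0); apply: lt_le_trans K_CS.
  by rewrite exprn_gt0// (lt_le_trans _ K_lb)// divr_gt0// mulr_gt0.
have sE : Num.sqrt (dotv th (S *m th)) ^+ 2 = dotv th (S *m th) by rewrite sqr_sqrtr ?ltW.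
apply: Phi_gap_le_ratio => //; rewrite ?sqrtr_gt0 ?sqr_ge0 ?exprMn ?DE ?sE //.
- rewrite KE; have := ler_norm (- dotv delta h); rewrite normrN.
  have := mulr_ge0 (ltW c_gt0) (ltW D2_gt0); nra.
- have := dotv_mulmx_le_sqr_norm2 h; rewrite QE KE.
  have := sqr_ge0 (dotv delta h); nra.
- lra.
- rewrite eE; set b := dotv E beta; set eh := dotv E h.
  have eh_le : eh ^+ 2 <= norm2 h ^+ 2.
    rewrite -real_normK ?num_real// ler_sqr ?nnegrE ?norm2_ge0//.
    by apply: le_trans (normr_dotv_le _ _) _; rewrite ler_piMl ?norm2_ge0.
  have c2k : c ^+ 2 * (4 + D2) ^+ 2 = 1 by rewrite -exprMn cD2 expr1n.
  have sq : (c * b + eh) ^+ 2 <= 2 * (c ^+ 2 * b ^+ 2) + 2 * eh ^+ 2.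
    by have := sqr_ge0 (c * b - eh); nra.
  have := ler_wpM2r (sqr_ge0 (4 + D2)) sq.
  have -> : (2 * (c ^+ 2 * b ^+ 2) + 2 * eh ^+ 2) * (4 + D2) ^+ 2
      = 2 * b ^+ 2 * (c ^+ 2 * (4 + D2) ^+ 2) + 2 * eh ^+ 2 * (4 + D2) ^+ 2 by ring.
  rewrite c2k mulr1; have := ler_wpM2r (sqr_ge0 (4 + D2)) eh_le; lra.
Qed.

Lemma cond_risk_gap_le_local : exists2 eps : R, 0 < eps & forall mh h,
  norm2 (mh - mu) <= eps -> norm2 h <= eps ->
  `|cond_risk S m1 m2 mh (c *: beta + h) - Phi (- Mahal S delta / 2)|
    <= 2 * 256 ^+ 2 * normal_peak 1 * (2 + M) / Mahal S delta
       * (norm2 h ^+ 2 + `|dotv (mh - mu) beta| ^+ 2).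
Proof.
have D2_gt0 : 0 < D2 by rewrite -sqrtr_gt0.
have c_gt0 : 0 < c by rewrite invr_gt0 ltr_wpDr ?ltW.
have cD2_gt0 : 0 < c * D2 by rewrite mulr_gt0.
have [ndelta nbeta] := (norm2_ge0 delta, norm2_ge0 beta).
have [den1 den2 den3] : [/\ 0 < 2 * (norm2 delta + 1), 0 < 16 * (M + 1) * (4 + D2) ^+ 2
    & 0 < 8 * (c * norm2 beta + 1)].
  by split; rewrite ?mulr_gt0 ?exprn_gt0 ?(ltr_wpDl ndelta) ?(ltr_wpDl M_ge0)
    ?(ltr_wpDr (ltW D2_gt0)) ?(ltr_wpDl (mulr_ge0 (ltW c_gt0) nbeta)).
have [eps [eps_gt0 eps1 eps_g eps_h eps_e]] : exists eps : R, [/\ 0 < eps, eps <= 1,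
    eps * (2 * (norm2 delta + 1)) <= c * D2,
    eps * (16 * (M + 1) * (4 + D2) ^+ 2) <= 3 * D2
    & eps * (8 * (c * norm2 beta + 1)) <= c * D2].
  pose e := Num.min 1 (Num.min (c * D2 / (2 * (norm2 delta + 1)))
    (Num.min (3 * D2 / (16 * (M + 1) * (4 + D2) ^+ 2)) (c * D2 / (8 * (c * norm2 beta + 1))))).
  have : e <= e := lexx e; rewrite {2}/e !le_min !ler_pdivlMr// => /and4P[e1 e2 e3 e4].
  exists e; split => //.
  by rewrite /e !lt_min ltr01 !divr_gt0 // mulr_gt0.
exists eps => // mh h E_le h_le.
have [nE nh] := (norm2_ge0 (mh - mu), norm2_ge0 h).
apply: cond_risk_gap_le => //.
- have := normr_dotv_le delta h; have := ler_wpM2l ndelta h_le; lra.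
- have nh2 : norm2 h ^+ 2 <= eps by nra.
  have := ler_wpM2l (mulr_ge0 (mulr_ge0 (ler0n _ 16) M_ge0) (sqr_ge0 (4 + D2))) nh2.
  have := mulr_ge0 (sqr_ge0 (4 + D2)) (ltW eps_gt0); nra.
- rewrite dotvDr dotvZr; have := ler_normD (c * dotv (mh - mu) beta) (dotv (mh - mu) h).
  rewrite normrM (gtr0_norm c_gt0).
  have := normr_dotv_le (mh - mu) beta; have := normr_dotv_le (mh - mu) h.
  have := ler_wpM2l nbeta E_le; have := ler_wpM2l nE h_le.
  have := mulr_ge0 (ltW c_gt0) nbeta; nra.
- exact: le_trans E_le eps1.
Qed.

End risk_gap.

Theorem proposition1 (R : realType) (p : nat)
  (Sigma : R -> 'M[R]_p) (mu1 mu2 : R -> 'cV[R]_p) (theta_star : R -> 'cV[R]_p)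
  (muhat1 muhat2 thetahat : nat -> R -> 'cV[R]_p) :
  (* Sigma(u) is a covariance matrix: symmetric, positive definite *)
  (forall u, 0 <= u <= 1 -> (Sigma u)^T = Sigma u) ->
  (forall u, 0 <= u <= 1 -> forall x : 'cV[R]_p, x != 0 -> 0 < dotv x (Sigma u *m x)) ->
  (* sup_u ||Sigma(u)||_2 < oo *)
  (exists M : R, forall u, 0 <= u <= 1 -> forall x : 'cV[R]_p,
      norm2 (Sigma u *m x) <= M * norm2 x) ->
  (* inf_u Delta(u) > 0 *)
  (exists d : R, 0 < d /\ forall u, 0 <= u <= 1 -> d <= Mahal (Sigma u) (mu1 u - mu2 u)) ->
  (* theta*(u) minimizes E[(Z - theta^T (X - mu(U)))^2 | U = u] *)
  (forall u, 0 <= u <= 1 -> forall theta : 'cV[R]_p,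
      cond_sq_loss (Sigma u) (mu1 u - mu2 u) (theta_star u)
      <= cond_sq_loss (Sigma u) (mu1 u - mu2 u) theta) ->
  (* consistency of the estimators, for each u *)
  (forall u, 0 <= u <= 1 -> (fun n => norm2 (muhat1 n u - mu1 u)) @ \oo --> (0 : R)) ->
  (forall u, 0 <= u <= 1 -> (fun n => norm2 (muhat2 n u - mu2 u)) @ \oo --> (0 : R)) ->
  (forall u, 0 <= u <= 1 -> (fun n => norm2 (thetahat n u - theta_star u)) @ \oo --> (0 : R)) ->
  exists C : R, 0 < C /\
    forall u, 0 <= u <= 1 ->
    \forall n \near \oo,
      let muhat := 2^-1 *: (muhat1 n u + muhat2 n u) in
      let mu := 2^-1 *: (mu1 u + mu2 u) in
      let beta_star := invmx (Sigma u) *m (mu1 u - mu2 u) in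
      `| cond_risk (Sigma u) (mu1 u) (mu2 u) muhat (thetahat n u)
         - Phi (- Mahal (Sigma u) (mu1 u - mu2 u) / 2) |
      <= C * (norm2 (thetahat n u - theta_star u) ^+ 2
              + `| dotv (muhat - mu) beta_star | ^+ 2).
Proof.
move=> S_sym S_pd [M S_bound] [d [d_gt0 d_le]] theta_min mu1_cvg mu2_cvg theta_cvg.
exists (2 * 256 ^+ 2 * normal_peak 1 * (2 + `|M|) / d); split.
  by rewrite divr_gt0// !mulr_gt0 ?normal_peak_gt0 ?ltr_wpDr.
move=> u u01; set S := Sigma u; set delta := mu1 u - mu2 u.
have Mahal_gt0 : 0 < Mahal S delta := lt_le_trans d_gt0 (d_le u u01).
have S_bound_abs x : norm2 (S *m x) <= `|M| * norm2 x.
  exact: le_trans (S_bound u u01 x) (ler_wpM2r (norm2_ge0 x) (ler_norm M)).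
have [eps eps_gt0 gap_le] := cond_risk_gap_le_local S (mu1 u) (mu2 u) `|M|
  (S_sym u u01) (S_pd u u01) (normr_ge0 M) S_bound_abs Mahal_gt0.
have ev (f : nat -> R) : f @ \oo --> 0 -> \forall n \near \oo, f n <= eps.
  by move=> /cvgr0_norm_le/(_ _ eps_gt0); apply: filterS => n; apply: le_trans (ler_norm _).
have theta_starE := cond_sq_loss_argmin S delta (S_sym u u01) (S_pd u u01) _ (theta_min u u01).
have theta_u_cvg := theta_cvg u u01; rewrite theta_starE in theta_u_cvg *.
set theta0 := _ *: (invmx S *m delta).
near=> n; rewrite /= -{1}(subrK theta0 (thetahat n u)) [_ - theta0 + theta0]addrC.
have h1 : norm2 (muhat1 n u - mu1 u) <= eps by near: n; exact: ev (mu1_cvg u u01).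
have h2 : norm2 (muhat2 n u - mu2 u) <= eps by near: n; exact: ev (mu2_cvg u u01).
have h3 : norm2 (thetahat n u - theta0) <= eps by near: n; exact: ev theta_u_cvg.
apply: le_trans (gap_le _ _ _ h3) _; first exact: norm2_midpoint_le.
rewrite ler_wpM2r ?addr_ge0 ?sqr_ge0// ler_wpM2l ?lef_pV2 ?posrE ?d_le//.
by rewrite !mulr_ge0 ?ltW ?normal_peak_gt0 ?ltr_wpDr.
Unshelve. all: end_near.
Qed.
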